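(* Let $\mathcal{A}$ be a strongly connected $d$-dimensional VASS MDP and $(\mathbf{y},\mathbf{z})$ a maximal solution of constraint system (II). There is a constant $k$ depending only on $\mathcal{A}$ (and $\mathbf{y},\mathbf{z}$) such that for every counter $c$ with $\mathbf{y}(c)>0$, every $\varepsilon>0$, every $p\in Q$ and every strategy $\sigma$, there exists $n_0$ such that for all $n\ge n_0$: $\mathbb{P}^\sigma_{p\mathbf{n}}\big(\mathcal{C}[c]\ge n^{1+\varepsilon}\big)\le k\,n^{-\varepsilon}$.
   Context: Let $d\ge 1$. A $d$-dimensional VASS MDP is a tuple $\mathcal{A}=(Q,(Q_n,Q_p),T,P)$, where $Q$ is a finite nonempty set of states partitioned into nondeterministic states $Q_n$ and probabilistic states $Q_p$; $T\subseteq Q\times\mathbb{Z}^d\times Q$ is a finite set of transitions such that for every $p\in Q$ the set $\mathit{Out}(p)$ of transitions of the form $(p,\mathbf{u},q)$ is nonempty; and $P$ assigns to every $t\in\mathit{Out}(p)$ with $p\in Q_p$ a positive rational probability such that $\sum_{t\in\mathit{Out}(p)}P(t)=1$. For $t=(p,\mathbf{u},q)$ write $\mathbf{u}_t=\mathbf{u}$. $\mathcal{A}$ is strongly connected if its underlying graph is strongly connected. A strategy $\sigma$ maps every finite path ending in a state $p\in Q_n$ to a probability distribution over $\mathit{Out}(p)$. A configuration $p\mathbf{v}$ ($p\in Q$, $\mathbf{v}\in\mathbb{Z}^d$) is terminal if some component of $\mathbf{v}$ is negative. A computation from $p\mathbf{v}$ along an infinite path $p_0,\mathbf{u}_1,p_1,\dots$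 is $p_0\mathbf{v}_0,p_1\mathbf{v}_1,\dots$ with $\mathbf{v}_0=\mathbf{v}$, $\mathbf{v}_{i+1}=\mathbf{v}_i+\mathbf{u}_{i+1}$; $\mathit{Term}(\pi)$ is the least $j$ with $p_j\mathbf{v}_j$ terminal ($\infty$ if none). $\mathbb{P}^\sigma_{p\mathbf{v}}$ is the probability measure on computations from $p\mathbf{v}$ under $\sigma$. $\mathbf{n}$ is the vector with all components $n$. $\mathcal{C}[c](\pi)=\sup\{\mathbf{v}_i(c):0\le i<\mathit{Term}(\pi)\}$. Constraint system (II): find $\mathbf{y}\in\mathbb{Z}^d$, $\mathbf{z}\in\mathbb{Z}^Q$ with $\mathbf{y}\ge\vec 0$, $\mathbf{z}\ge\vec 0$, $\mathbf{z}(q)-\mathbf{z}(p)+\sum_{i=1}^d\mathbf{u}(i)\mathbf{y}(i)\le 0$ for every $(p,\mathbf{u},q)\in T$ with $p\in Q_n$, and $\sum_{t=(p,\mathbf{u},q)\in\mathit{Out}(p)}P(t)\big(\mathbf{z}(q)-\mathbf{z}(p)+\sum_{i=1}^d\mathbf{u}_t(i)\mathbf{y}(i)\big)\le 0$ for every $p\in Q_p$. Its objective inequalities are $\mathbf{y}(c)>0$ for each counter $c$, the strict versions of the inequality for each $(p,\mathbf{u},q)\in T$ with $p\in Q_n$, and the strict version of the probabilistic inequality for each $p\in Q_p$. A solution is maximal if every objective inequality satisfied strictly by some solution is satisfied strictly by it. *)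

From HB Require Import structures.
From mathcomp Require Import all_boot all_order all_algebra.
From mathcomp Require Import all_classical all_reals.
From mathcomp Require Import exp.
Set Implicit Arguments. Unset Strict Implicit. Unset Printing Implicit Defensive.
Import Order.TTheory GRing.Theory Num.Theory.
Local Open Scope ring_scope.

Definition vec (d : nat) := {ffun 'I_d -> int}.

(* A d-dimensional VASS MDP.  [trans] lists the finite set T of transitions
   (p, u, q); [nondet p] says p is in Q_n (otherwise p is in Q_p);
   [prob] is the probability assignment P (only relevant on transitions
   leaving probabilistic states). *)
Record VASSMDP (d : nat) := {
  st : finType;
  nondet : pred st;
  trans : seq (st * vec d * st);
  prob : st * vec d * st -> rat
}.
Arguments st {d} v.
Arguments nondet {d} v.
Arguments trans {d} v.
Arguments prob {d} v.

Section Defs.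
Variables (d : nat) (A : VASSMDP d).
Local Notation Q := (st A).
Local Notation Tr := (Q * vec d * Q)%type.

Definition src (t : Tr) : Q := t.1.1.
Definition upd (t : Tr) : vec d := t.1.2.
Definition tgt (t : Tr) : Q := t.2.

Definition Out (p : Q) : seq Tr := [seq t <- trans A | src t == p].

Definition wf_VASSMDP : Prop :=
  [/\ uniq (trans A),
      (forall p : Q, Out p != [::]) &
      (forall p : Q, ~~ nondet A p ->
         (forall t, t \in Out p -> 0 < prob A t) /\
         \sum_(t <- Out p) prob A t = 1)].

Definition edge : rel Q := fun p q => has (fun t => (src t == p) && (tgt t == q)) (trans A).
Definition strongly_connected : Prop := forall p q : Q, connect edge p q.

(* Finite paths: a start state and the sequence of transitions taken. *)
Definition last_state (p0 : Q) (ts : seq Tr) : Q := last p0 (map tgt ts).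

(* A (randomized, history-dependent) strategy: for each finite path
   (start state p0, transitions ts) ending in a state of Q_n, a probability
   distribution over Out(last state). *)
End Defs.
Arguments Out {d} A p.
Arguments last_state {d A} p0 ts.

Section Defs2.
Variables (R : realType) (d : nat) (A : VASSMDP d).
Local Notation Q := (st A).
Local Notation Tr := (Q * vec d * Q)%type.

Definition is_strategy (sigma : Q -> seq Tr -> Tr -> R) : Prop :=
  forall (p0 : Q) (ts : seq Tr), nondet A (last_state p0 ts) ->
    (forall t, 0 <= sigma p0 ts t) /\
    (forall t, t \notin Out A (last_state p0 ts) -> sigma p0 ts t = 0) /\
    \sum_(t <- Out A (last_state p0 ts)) sigma p0 ts t = 1.

Definition step_prob (sigma : Q -> seq Tr -> Tr -> R) (p0 : Q) (ts : seq Tr) (t : Tr) : R :=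
  let q := last_state p0 ts in
  if t \in Out A q then
    (if nondet A q then sigma p0 ts t else ratr (prob A t))
  else 0.

(* Probability of the cylinder of infinite paths with prefix (p0, ts). *)
Fixpoint path_prob_rec (sigma : Q -> seq Tr -> Tr -> R) (p0 : Q) (hist : seq Tr)
    (ts : seq Tr) : R :=
  match ts with
  | [::] => 1
  | t :: ts' => step_prob sigma p0 hist t * path_prob_rec sigma p0 (rcons hist t) ts'
  end.
Definition path_prob sigma p0 ts := path_prob_rec sigma p0 [::] ts.

Fixpoint seqs_of_len {T : Type} (m : nat) (s : seq T) : seq (seq T) :=
  match m with
  | 0 => [:: [::]]
  | m'.+1 => [seq t :: r | t <- s, r <- seqs_of_len m' s]
  end.

Definition vec_after (v : vec d) (ts : seq Tr) (i : nat) : 'I_d -> int :=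
  fun c => v c + \sum_(t <- take i ts) upd t c.

Definition nonterminal (w : 'I_d -> int) : bool := [forall c, 0 <= w c].

(* For a computation whose first m transitions are ts: "some index i <= m
   with i < Term(pi) has v_i(c) >= x".  The event  C[c](pi) >= x  (x real)
   is the increasing union over m of these prefix events, since C[c] is a
   supremum of integers. *)
Definition reach_within (v : vec d) (c : 'I_d) (x : R) (m : nat) (ts : seq Tr) : bool :=
  [exists i : 'I_m.+1,
     [forall j : 'I_m.+1, (j <= i)%N ==> nonterminal (vec_after v ts j)] &&
     (x <= ((vec_after v ts i c)%:~R : R))].

Definition prob_reach_within (sigma : Q -> seq Tr -> Tr -> R) (p : Q) (v : vec d)
    (c : 'I_d) (x : R) (m : nat) : R :=
  \sum_(ts <- seqs_of_len m (trans A))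
     (if reach_within v c x m ts then path_prob sigma p ts else 0).

(* P^sigma_{p v}( C[c] >= x ) <= b, written via continuity of measure from
   below: the event is the increasing union over m of the prefix events. *)
Definition prob_C_ge_le (sigma : Q -> seq Tr -> Tr -> R) (p : Q) (v : vec d)
    (c : 'I_d) (x : R) (b : R) : Prop :=
  forall m : nat, prob_reach_within sigma p v c x m <= b.
End Defs2.
Arguments is_strategy {R d} A sigma.
Arguments prob_C_ge_le {R d} A sigma p v c x b.

Section System.
Variables (d : nat) (A : VASSMDP d).
Local Notation Q := (st A).
Local Notation Tr := (Q * vec d * Q)%type.

Definition lhs (y : 'I_d -> int) (z : Q -> int) (t : Tr) : int :=
  z (tgt t) - z (src t) + \sum_(i < d) upd t i * y i.

Definition prob_lhs (y : 'I_d -> int) (z : Q -> int) (p : Q) : rat :=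
  \sum_(t <- Out A p) prob A t * (lhs y z t)%:~R.

Definition solution_II (y : 'I_d -> int) (z : Q -> int) : Prop :=
  [/\ (forall i, 0 <= y i), (forall q, 0 <= z q),
      (forall t, t \in trans A -> nondet A (src t) -> lhs y z t <= 0) &
      (forall p, ~~ nondet A p -> prob_lhs y z p <= 0)].

Definition maximal_solution_II (y : 'I_d -> int) (z : Q -> int) : Prop :=
  solution_II y z /\
  forall (y' : 'I_d -> int) (z' : Q -> int), solution_II y' z' ->
    [/\ (forall c, 0 < y' c -> 0 < y c),
        (forall t, t \in trans A -> nondet A (src t) -> lhs y' z' t < 0 -> lhs y z t < 0) &
        (forall p, ~~ nondet A p -> prob_lhs y' z' p < 0 -> prob_lhs y z p < 0)].
End System.

Definition nvec (d : nat) (n : nat) : vec d := [ffun _ => n%:Z].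
Arguments wf_VASSMDP {d} A.
Arguments strongly_connected {d} A.
Arguments solution_II {d} A y z.
Arguments maximal_solution_II {d} A y z.

(* The potential W(v, q) = y.v + z(q) is a supermartingale along every run:
   constraint system (II) says exactly that its expected one-step change is
   nonpositive in every state, whatever the strategy.  One transition lowers
   a nonnegative counter vector by at most the largest update entry K, so
   W + C >= 0 with C = K * sum y up to and including the step at which the
   run terminates.
   Stopping when counter c first reaches x (or the run terminates) gives
   P(C[c] >= x) * (x + C) <= W(n, p) + C <= k n, because W >= v(c) on
   nonterminal configurations when y(c) >= 1.  For x = n^(1+eps) this is
   the bound k n^(-eps). *)
From HB Require Import structures.
From mathcomp Require Import all_boot all_order all_algebra.
From mathcomp Require Import all_classical all_reals.
From mathcomp Require Import exp.
From mathcomp Require Import zify ring.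
Set Implicit Arguments. Unset Strict Implicit. Unset Printing Implicit Defensive.
Import Order.TTheory GRing.Theory Num.Theory.
Local Open Scope ring_scope.

Definition hits_within (n : nat) (P Q : pred nat) : bool :=
  [exists i : 'I_n, [forall j : 'I_n, (j <= i)%N ==> P j] && Q i].

Section HitsWithin.
Variables P Q : pred nat.

Lemma hits_within_now n : P 0 -> Q 0 -> hits_within n.+1 P Q.
Proof.
move=> P0 Q0; apply/existsP; exists ord0; rewrite Q0 andbT.
by apply/forallP => -[[|j] ?].
Qed.

Lemma hits_within_stopped n : ~~ P 0 -> ~~ hits_within n P Q.
Proof.
move=> nP0; apply/existsP => -[i /andP[/forallP P_le _]].
have i_gt0 : (0 < n)%N by case: i {P_le}; case: n.
by move/implyP: (P_le (Ordinal i_gt0)) => /(_ (leq0n _)); apply/negP.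
Qed.

Lemma hits_within1 : ~~ Q 0 -> ~~ hits_within 1 P Q.
Proof.
by move=> nQ0; apply/existsP => -[[[|//] ?] /andP[_ Q0]]; rewrite Q0 in nQ0.
Qed.

Lemma hits_withinS n : P 0 -> ~~ Q 0 ->
  hits_within n.+2 P Q = hits_within n.+1 (fun j => P j.+1) (fun j => Q j.+1).
Proof.
move=> P0 nQ0; apply/existsP/existsP.
  case=> -[[|i] lt_i] /andP[/forallP P_le Qi]; first by rewrite Qi in nQ0.
  exists (Ordinal (lt_i : (i < n.+1)%N)); rewrite Qi andbT.
  by apply/forallP => -[j lt_j]; apply: (P_le (Ordinal (lt_j : (j.+1 < n.+2)%N))).
case=> -[i lt_i] /andP[/forallP P_le Qi].
exists (Ordinal (lt_i : (i.+1 < n.+2)%N)); rewrite Qi andbT.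
apply/forallP => -[[|j] lt_j] //; exact: (P_le (Ordinal (lt_j : (j < n.+1)%N))).
Qed.

End HitsWithin.

Section ReachWithin.
Variables (R : realType) (d : nat) (A : VASSMDP d).
Local Notation Tr := (st A * vec d * st A)%type.
Implicit Types (v : vec d) (c : 'I_d) (x : R) (t : Tr) (ts : seq Tr).

Lemma eq_nonterminal (f g : 'I_d -> int) : f =1 g -> nonterminal f = nonterminal g.
Proof. by move=> fg; apply: eq_forallb => i; rewrite fg. Qed.

Lemma vec_after0 v ts : vec_after v ts 0 =1 v.
Proof. by move=> i; rewrite /vec_after take0 big_nil addr0. Qed.

Lemma vec_after_cons v t ts j : vec_after v (t :: ts) j.+1 =1 vec_after (v + upd t) ts j.
Proof. by move=> i; rewrite /vec_after /= big_cons ffunE addrA. Qed.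

Lemma reach_withinE v c x m ts :
  reach_within v c x m ts = hits_within m.+1
    (fun j => nonterminal (vec_after v ts j)) (fun i => x <= (vec_after v ts i c)%:~R).
Proof. by []. Qed.

Lemma reach_within_now v c x m ts :
  nonterminal v -> x <= (v c)%:~R -> reach_within v c x m ts.
Proof.
move=> nt hit; rewrite reach_withinE hits_within_now ?vec_after0 //.
by rewrite (eq_nonterminal (vec_after0 _ _)).
Qed.

Lemma reach_within_stopped v c x m ts : ~~ nonterminal v -> ~~ reach_within v c x m ts.
Proof.
by move=> tm; rewrite reach_withinE hits_within_stopped // (eq_nonterminal (vec_after0 _ _)).
Qed.

Lemma reach_within0 v c x ts : ~~ (x <= (v c)%:~R) -> ~~ reach_within v c x 0 ts.
Proof. by move=> miss; rewrite reach_withinE hits_within1 // vec_after0. Qed.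

Lemma reach_within_cons v c x m t ts : nonterminal v -> ~~ (x <= (v c)%:~R) ->
  reach_within v c x m.+1 (t :: ts) = reach_within (v + upd t) c x m ts.
Proof.
move=> nt miss; rewrite !reach_withinE hits_withinS ?vec_after0 //; last first.
  by rewrite (eq_nonterminal (vec_after0 _ _)).
congr (hits_within _ _ _); apply/funext => j.
  exact/eq_nonterminal/vec_after_cons.
by rewrite vec_after_cons.
Qed.

End ReachWithin.

Section StepProb.
Variables (R : realType) (d : nat) (A : VASSMDP d).
Local Notation Tr := (st A * vec d * st A)%type.
Variables (sigma : st A -> seq Tr -> Tr -> R) (p0 : st A).
Hypotheses (wfA : wf_VASSMDP A) (strat : is_strategy A sigma).
Local Notation sp := (step_prob sigma p0).
Local Notation pp := (path_prob_rec sigma p0).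

Lemma last_state_rcons hist t : last_state p0 (rcons hist t) = tgt t.
Proof. by rewrite /last_state map_rcons last_rcons. Qed.

Lemma step_prob_ge0 hist t : 0 <= sp hist t.
Proof.
rewrite /step_prob; case: ifP => // t_out; case: ifP => [nd | /negbT nd].
  by case: (strat nd).
case: wfA => _ _ /(_ _ nd) [prob_gt0 _].
by rewrite ler0q ltW ?prob_gt0.
Qed.

Lemma sum_step_prob_Out hist (F : Tr -> R) :
  \sum_(t <- trans A) sp hist t * F t =
  \sum_(t <- Out A (last_state p0 hist)) sp hist t * F t.
Proof.
rewrite /Out big_filter [RHS]big_mkcond /=; apply: eq_big_seq => t t_in.
by rewrite /step_prob /Out mem_filter t_in andbT; case: ifP; rewrite ?mul0r.
Qed.

Lemma step_prob_sum1 hist : \sum_(t <- Out A (last_state p0 hist)) sp hist t = 1.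
Proof.
rewrite /step_prob -big_mkcond -big_seq /=; case: (boolP (nondet A _)) => nd.
  by case: (strat nd) => _ [].
case: wfA => _ _ /(_ _ nd) [_ sum1].
by rewrite -rmorph_sum sum1 rmorph1.
Qed.

Lemma step_prob_mass hist : \sum_(t <- trans A) sp hist t = 1.
Proof.
have := sum_step_prob_Out hist (fun=> 1).
by rewrite !(eq_bigr _ (fun t _ => mulr1 (sp hist t))) step_prob_sum1.
Qed.

Lemma path_prob_rec_ge0 hist ts : 0 <= pp hist ts.
Proof.
elim: ts hist => [|t ts IH] hist /=; first exact: ler01.
exact: mulr_ge0 (step_prob_ge0 _ _) (IH _).
Qed.

Lemma path_prob_rec_mass m hist : \sum_(ts <- seqs_of_len m (trans A)) pp hist ts = 1.
Proof.
elim: m hist => [|m IH] hist /=; first by rewrite big_seq1.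
rewrite big_allpairs_dep /= -[RHS](step_prob_mass hist); apply: eq_bigr => t _.
by rewrite -big_distrr /= IH mulr1.
Qed.

End StepProb.

Section Potential.
Variables (d : nat) (A : VASSMDP d) (y : 'I_d -> int) (z : st A -> int).
Hypothesis solII : solution_II A y z.
Local Notation Tr := (st A * vec d * st A)%type.
Implicit Types (v : vec d) (q : st A).

Definition weight (v : vec d) (q : st A) : int := \sum_(i < d) v i * y i + z q.

Definition max_update : nat := \max_(t <- trans A) \max_(i < d) `|upd t i|%N.

Definition weight_slack : int := max_update%:Z * \sum_(i < d) y i.

Lemma y_ge0 i : 0 <= y i. Proof. by case: solII. Qed.

Lemma z_ge0 q : 0 <= z q. Proof. by case: solII. Qed.

Lemma weight_slack_ge0 : 0 <= weight_slack.
Proof. by rewrite mulr_ge0 // sumr_ge0 // => i _; apply: y_ge0. Qed.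

Lemma upd_ge (t : Tr) i : t \in trans A -> - max_update%:Z <= upd t i.
Proof.
move=> t_in; have : (`|upd t i| <= max_update)%N.
  exact: leq_trans (leq_bigmax (F := fun i => `|upd t i|%N) i)
    (leq_bigmax_seq (F := fun t => \max_(i < d) `|upd t i|%N) t t_in isT).
by case: (upd t i) => k /=; lia.
Qed.

Lemma weight_add_slack_ge0 v q : (forall i, - max_update%:Z <= v i) ->
  0 <= weight v q + weight_slack.
Proof.
move=> v_ge; rewrite /weight /weight_slack big_distrr addrAC -big_split /=.
rewrite addr_ge0 ?z_ge0 // sumr_ge0 // => i _.
by rewrite -mulrDl mulr_ge0 ?y_ge0 // -lerBlDr sub0r.
Qed.

Lemma counter_le_weight v q c : nonterminal v -> 0 < y c -> v c <= weight v q.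
Proof.
move=> /forallP v_ge0 y_c; rewrite /weight (bigD1 c) //= -addrA.
have vc_le : v c <= v c * y c by rewrite -{1}[v c]mulr1 ler_wpM2l.
apply: le_trans vc_le _; rewrite lerDl.
by rewrite addr_ge0 ?z_ge0 // sumr_ge0 // => i _; rewrite mulr_ge0 ?y_ge0.
Qed.

Lemma weight_step v (t : Tr) :
  weight (v + upd t) (tgt t) = weight v (src t) + lhs y z t.
Proof.
rewrite /weight /lhs; under eq_bigr do rewrite ffunE mulrDl.
by rewrite big_split /=; ring.
Qed.

Lemma weight_nvec_le n q : (0 < n)%N ->
  weight (nvec d n) q + weight_slack <=
  n%:Z * (\sum_(i < d) y i + \sum_p z p + weight_slack).
Proof.
move=> n_gt0; rewrite /weight.
have -> : \sum_(i < d) nvec d n i * y i = n%:Z * \sum_(i < d) y i.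
  by rewrite big_distrr; apply: eq_bigr => i _; rewrite ffunE.
have zq_le : z q <= \sum_p z p.
  by rewrite (bigD1 q) //= lerDl sumr_ge0 // => p _; apply: z_ge0.
have Sy_ge0 : 0 <= \sum_(i < d) y i by rewrite sumr_ge0 // => i _; apply: y_ge0.
have := weight_slack_ge0; have := z_ge0 q; nia.
Qed.

End Potential.

Section OptionalStopping.
Variables (R : realType) (d : nat) (A : VASSMDP d) (y : 'I_d -> int) (z : st A -> int).
Local Notation Tr := (st A * vec d * st A)%type.
Variables (sigma : st A -> seq Tr -> Tr -> R) (p0 : st A).
Hypotheses (wfA : wf_VASSMDP A) (strat : is_strategy A sigma) (solII : solution_II A y z).
Local Notation sp := (step_prob sigma p0).
Local Notation pp := (path_prob_rec sigma p0).
Local Notation K := (max_update A).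
Local Notation C := (weight_slack A y).
Local Notation W := (weight y z).
Implicit Types (v : vec d) (hist : seq Tr).

Lemma expected_drift_le0 hist :
  \sum_(t <- Out A (last_state p0 hist)) sp hist t * (lhs y z t)%:~R <= 0.
Proof.
case: solII => _ _ nondet_le0 prob_le0.
rewrite big_seq_cond /step_prob; case: (boolP (nondet A _)) => nd.
  apply: sumr_le0 => t /andP[t_out _]; rewrite t_out mulr_ge0_le0 //.
    by case: (strat nd).
  move: t_out; rewrite mem_filter => /andP[/eqP src_t t_in].
  by rewrite lerz0 nondet_le0 // src_t.
rewrite -big_seq_cond (eq_big_seq (fun t => ratr (prob A t * (lhs y z t)%:~R))).
  by rewrite -rmorph_sum lerq0 prob_le0.
by move=> t ->; rewrite rmorphM /= ratr_int.
Qed.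

Variables (c : 'I_d) (x : R).
Hypothesis y_c : 0 < y c.

(* [hist] is the path already taken, on which the strategy may depend, and [v]
   the counter vector reached along it; the two are not tied together here. *)
Definition reach_prob hist v m : R :=
  \sum_(ts <- seqs_of_len m (trans A)) (if reach_within v c x m ts then pp hist ts else 0).

Lemma prob_reach_withinE v m : prob_reach_within sigma p0 v c x m = reach_prob [::] v m.
Proof. by []. Qed.

Lemma reach_prob_ge0 hist v m : 0 <= reach_prob hist v m.
Proof. by apply: sumr_ge0 => ts _; case: ifP => // _; apply: path_prob_rec_ge0. Qed.

Lemma reach_prob_stopped hist v m : ~~ nonterminal v -> reach_prob hist v m = 0.
Proof.
by move=> tm; apply: big1 => ts _; rewrite (negPf (reach_within_stopped _ _ _ _ tm)).
Qed.

Lemma reach_prob_now hist v m : nonterminal v -> x <= (v c)%:~R -> reach_prob hist v m = 1.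
Proof.
move=> nt hit; rewrite -(path_prob_rec_mass p0 wfA strat m hist).
by apply: eq_bigr => ts _; rewrite reach_within_now.
Qed.

Lemma reach_prob0 hist v : ~~ (x <= (v c)%:~R) -> reach_prob hist v 0 = 0.
Proof. by move=> miss; rewrite /reach_prob /= big_seq1 (negPf (reach_within0 _ miss)). Qed.

Lemma reach_probS hist v m : nonterminal v -> ~~ (x <= (v c)%:~R) ->
  reach_prob hist v m.+1 =
  \sum_(t <- trans A) sp hist t * reach_prob (rcons hist t) (v + upd t) m.
Proof.
move=> nt miss; rewrite /reach_prob /= big_allpairs_dep; apply: eq_bigr => t _.
rewrite big_distrr; apply: eq_bigr => ts _ /=.
by rewrite reach_within_cons //; case: ifP; rewrite ?mulr0.
Qed.

Lemma reach_prob_bound_stopped hist v m :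
  (forall i, - K%:Z <= v i) -> ~~ nonterminal v || (x <= (v c)%:~R) ->
  reach_prob hist v m * (x + C%:~R) <= (W v (last_state p0 hist) + C)%:~R.
Proof.
move=> v_ge; case: (boolP (nonterminal v)) => [nt /= hit | tm _].
  rewrite reach_prob_now // mul1r intrD lerD2r; apply: le_trans hit _.
  by rewrite ler_int counter_le_weight.
by rewrite reach_prob_stopped // mul0r ler0z weight_add_slack_ge0.
Qed.

Lemma reach_prob_bound m hist v : (forall i, - K%:Z <= v i) ->
  reach_prob hist v m * (x + C%:~R) <= (W v (last_state p0 hist) + C)%:~R.
Proof.
elim: m hist v => [|m IH] hist v v_ge;
  (have [stop | ] := boolP (~~ nonterminal v || (x <= (v c)%:~R));
    first exact: reach_prob_bound_stopped);
  move=> /norP[/negbNE nt miss].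
  by rewrite reach_prob0 // mul0r ler0z weight_add_slack_ge0.
have step_bound t : t \in trans A ->
    reach_prob (rcons hist t) (v + upd t) m * (x + C%:~R) <= (W (v + upd t) (tgt t) + C)%:~R.
  move=> t_in; rewrite -(last_state_rcons p0 hist t); apply: IH => i.
  by rewrite ffunE -[- _]add0r lerD ?upd_ge //; move/forallP: nt.
rewrite reach_probS // big_distrl /=.
apply: le_trans (_ : \sum_(t <- trans A) sp hist t * (W (v + upd t) (tgt t) + C)%:~R <= _).
  rewrite big_seq [X in _ <= X]big_seq; apply: ler_sum => t t_in.
  by rewrite -mulrA ler_wpM2l ?step_prob_ge0 ?step_bound.
rewrite sum_step_prob_Out big_seq.
under eq_bigr => t t_out.
  move: t_out; rewrite mem_filter => /andP[/eqP src_t _].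
  rewrite weight_step src_t addrAC intrD mulrDr.
  over.
rewrite -big_seq big_split /= -big_distrl /= step_prob_sum1 // mul1r gerDl.
exact: expected_drift_le0.
Qed.

End OptionalStopping.

Lemma markov_powR (R : realType) (n : nat) (eps F s k : R) : (0 < n)%N ->
  0 <= F -> 0 <= s -> F * (n%:R `^ (1 + eps) + s) <= n%:R * k ->
  F <= k * n%:R `^ (- eps).
Proof.
move=> n_gt0 F_ge0 s_ge0 F_le.
have n_gt0R : (0 : R) < n%:R by rewrite ltr0n.
have a_gt0 : 0 < n%:R `^ eps by rewrite powR_gt0.
rewrite powRN ler_pdivlMr // -(ler_pM2l n_gt0R).
apply: le_trans F_le; rewrite powRD; last by rewrite pnatr_eq0 -lt0n n_gt0 implybT.
by rewrite powRr1 ?(ltW n_gt0R) // mulrCA mulrDr lerDl mulr_ge0.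
Qed.

Theorem lemma4p4 (R : realType) (d : nat) (A : VASSMDP d)
  (y : 'I_d -> int) (z : st A -> int) :
  (0 < d)%N -> wf_VASSMDP A -> strongly_connected A ->
  maximal_solution_II A y z ->
  exists k : R,
    forall (c : 'I_d), 0 < y c ->
    forall (eps : R), 0 < eps ->
    forall (p : st A) (sigma : st A -> seq (st A * vec d * st A) -> st A * vec d * st A -> R),
      is_strategy A sigma ->
      exists n0 : nat, forall n : nat, (n0 <= n)%N ->
        prob_C_ge_le A sigma p (nvec d n) c
          ((n%:R : R) `^ (1 + eps)) (k * (n%:R : R) `^ (- eps)).
Proof.
move=> _ wfA _ [solII _].
exists (\sum_(i < d) y i + \sum_q z q + weight_slack A y)%:~R.
move=> c y_c eps _ p sigma strat; exists 1%N => n n_gt0 m.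
rewrite prob_reach_withinE; apply: (markov_powR (s := (weight_slack A y)%:~R) n_gt0).
- exact: reach_prob_ge0 p wfA strat _ _ _ _ _.
- by rewrite ler0z (weight_slack_ge0 solII).
- apply: le_trans (reach_prob_bound p wfA strat solII _ y_c m [::] _) _.
    by move=> i; rewrite ffunE; lia.
  by rewrite -mulrz_nat -intrM ler_int natz weight_nvec_le.
Qed.
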